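(* Let $\varepsilon^*,C^*,\gamma>0$, $\lambda_1,\lambda_2>0$, and suppose $\lambda_1h\le\Delta t\le\lambda_2h$. Let $\check\rho^n,\check\rho^{n+1}\in\mathcal C$ with $\varepsilon^*\le\check\rho^{n+1}\le C^*$ and $0<\check\rho^n\le C^*$ pointwise, let $\rho^n,\rho^{n+1}\in\mathcal C$ be pointwise positive, set $\tilde\rho^k=\check\rho^k-\rho^k$ ($k=n,n+1$), and assume $\|\tilde\rho^n\|_2\le\Delta t^{15/4}+h^{15/4}$. Let $\tilde\psi^n\in\mathcal C$ with $\|\tilde\psi^n\|_\infty\le h$. Define $\tilde S^{n+\frac12}=\check S^{n+\frac12}-S^{n+\frac12}$, where $$\check S^{n+\frac12}=\ln\check\rho^{n+1}-\frac{\check\rho^{n+1}-\check\rho^n}{2\check\rho^{n+1}}-\frac{(\check\rho^{n+1}-\check\rho^n)^2}{6(\check\rho^{n+1})^2},\quad S^{n+\frac12}=\ln\rho^{n+1}-\frac{\rho^{n+1}-\rho^n}{2\rho^{n+1}}-\frac{(\rho^{n+1}-\rho^n)^2}{6(\rho^{n+1})^2},$$ let $\mathbb K=\{(i,j,k):\rho^{n+1}_{i,j,k}\ge 2C^*+1\}$ and $L^*=|\mathbb K|$. Then there exist constants $\check C_2$ (depending only on $\varepsilon^*,\gamma,C^*$) and $\check C_3$ (depending only on $C^*,\gamma$) such that, for $\Delta t,h$ sufficiently small, $$\langle\tilde\rho^{n+1},\gamma\tilde S^{n+\frac12}+\tilde\psi^n\rangle\ge\frac{C^*}{6}\gamma L^*h^3-\check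 C_2\big(\gamma^2\|\tilde\rho^n\|_2^2+\|\tilde\psi^n\|_2^2\big),$$ and, if $L^*=0$, $$\langle\tilde\rho^{n+1},\gamma\tilde S^{n+\frac12}+\tilde\psi^n\rangle\ge\check C_3\|\tilde\rho^{n+1}\|_2^2-\check C_2\big(\gamma^2\|\tilde\rho^n\|_2^2+\|\tilde\psi^n\|_2^2\big).$$
   Context: Grid: $\Omega=(a,b)^3$, $h=(b-a)/N$; $\mathcal C$ is the space of real grid functions on the cell centers indexed by $1\le i,j,k\le N$. $\langle f,g\rangle=h^3\sum_{i,j,k=1}^Nf_{i,j,k}g_{i,j,k}$, $\|f\|_2^2=\langle f,f\rangle$, $\|f\|_\infty=\max_{i,j,k}|f_{i,j,k}|$. All nonlinear functions are applied pointwise. *)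

From HB Require Import structures.
From mathcomp Require Import all_boot all_order all_algebra.
From mathcomp Require Import all_classical all_reals all_analysis.
Set Implicit Arguments. Unset Strict Implicit. Unset Printing Implicit Defensive.
Import Order.TTheory GRing.Theory Num.Theory.
Local Open Scope ring_scope.

(* Cell-centred grid indices (i,j,k), 1 <= i,j,k <= N, represented 0-based. *)
Definition grid (N : nat) : finType := ('I_N * 'I_N * 'I_N)%type.

Definition gip (R : realType) (N : nat) (h : R) (f g : grid N -> R) : R :=
  h ^+ 3 * \sum_(p : grid N) f p * g p.

Definition gnorm2 (R : realType) (N : nat) (h : R) (f : grid N -> R) : R :=
  Num.sqrt (gip h f f).

Definition gnormInf (R : realType) (N : nat) (f : grid N -> R) : R :=
  \big[Num.max/0]_(p : grid N) `|f p|.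

Definition Sfun (R : realType) (N : nat) (rho1 rho0 : grid N -> R) (p : grid N) : R :=
  ln (rho1 p) - (rho1 p - rho0 p) / (2 * rho1 p)
  - (rho1 p - rho0 p) ^+ 2 / (6 * (rho1 p) ^+ 2).

Definition Lstar (R : realType) (N : nat) (Cs : R) (rho1 : grid N -> R) : nat :=
  #|[set p : grid N | 2 * Cs + 1 <= rho1 p]|.

From HB Require Import structures.
From mathcomp Require Import all_boot all_order all_algebra.
From mathcomp Require Import all_classical all_reals all_analysis.
From mathcomp Require Import ring lra.
Import Order.TTheory GRing.Theory Num.Theory.
Local Open Scope ring_scope.

(* The inequality is proved cell by cell and summed.  Write S(u, v) for the
   value of S^{n+1/2} at a cell with densities u = rho^{n+1}, v = rho^n.
   S(., v) is increasing, with S(u2, v) - S(u1, v) >= (u2 - u1) / (4 u2), and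
   S(u, .) is Lipschitz with a constant controlled by 1/u.  The consistency
   assumption gives |rho~^n| <= h^(1/2) pointwise, and |psi~^n| <= h.
   On a cell of K, rho^{n+1} >= 2C* + 1 exceeds rho^^{n+1} <= C* by more than
   C* + 1, and the jump S(2C* + 1, v) - S(C*, v) >= 5/24 dominates both
   perturbations, leaving at least C* gamma / 6.  On the other cells both
   densities lie below 2C* + 1, so monotonicity yields the coercive term
   gamma |rho~^{n+1}|^2 / (4 (2C* + 1)), half of which absorbs the
   perturbations through Young's inequality. *)

Section Shalf.
Context {R : realType}.
Implicit Types (e u v w x y M : R).

Definition Shalf u v : R :=
  ln u - (u - v) / (2 * u) - (u - v) ^+ 2 / (6 * u ^+ 2).

Lemma ln_ge_1_inv u : 0 < u -> 1 - u^-1 <= ln u.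
Proof.
move=> u0; have uV0 : 0 < u^-1 by rewrite invr_gt0.
have := @le_ln1Dx R (u^-1 - 1) ltac:(lra).
by rewrite addrC subrK lnV ?posrE //; lra.
Qed.

Lemma Shalf_ratio u v : 0 < u ->
  Shalf u v = ln u - (1 - v / u) / 2 - (1 - v / u) ^+ 2 / 6.
Proof. by move=> u0; rewrite /Shalf; congr (_ - _ - _); field; rewrite gt_eqF. Qed.

(* With w^2 = u2/u1 and a = v/u1, [Shalf_increment] reduces to this
   inequality; multiplied by (w+1)(w^2+1) it becomes a sum of squares. *)
Lemma Shalf_increment_poly_ge0 w a : 1 <= w ->
  0 <= 12 * w ^+ 3 - a * (w + 1) * (5 * w ^+ 2 - a * (w ^+ 2 + 1))
       - 3 / 2 * w ^+ 2 * (w + 1).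
Proof.
move=> w1; set P := _ - _ - _.
have A0 : 0 < (w + 1) * (w ^+ 2 + 1) by apply: mulr_gt0; nra.
have cubic0 : 0 <= 17 * w ^+ 3 - 31 * w ^+ 2 + 42 * w - 6.
  have := sqr_ge0 (w - 31 / 34); nra.
have -> : P = ((w + 1) * (w ^+ 2 + 1))^-1 *
    (((w + 1) * (w ^+ 2 + 1) * a - 5 / 2 * w ^+ 2 * (w + 1)) ^+ 2
     + (w + 1) * w ^+ 2 * (17 * w ^+ 3 - 31 * w ^+ 2 + 42 * w - 6) / 4).
  by rewrite /P; field; apply/andP; split; rewrite gt_eqF //; nra.
apply: mulr_ge0; first by rewrite invr_ge0; exact: ltW.
apply: addr_ge0; first exact: sqr_ge0.
by apply: divr_ge0 => //; apply: mulr_ge0 => //; apply: mulr_ge0; nra.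
Qed.

Lemma Shalf_increment u1 u2 v : 0 < u1 -> u1 <= u2 ->
  (u2 - u1) / (4 * u2) <= Shalf u2 v - Shalf u1 v.
Proof.
move=> u10 u12; have u20 : 0 < u2 by apply: lt_le_trans u12.
have q1 : 1 <= u2 / u1 by rewrite ler_pdivlMr // mul1r.
set w := Num.sqrt (u2 / u1).
have w1 : 1 <= w by rewrite /w -sqrtr1 ler_sqrt // (le_trans ler01 q1).
have w0 : 0 < w by lra.
have u2E : u2 = w ^+ 2 * u1.
  by rewrite /w sqr_sqrtr ?(le_trans ler01 q1) // mulfVK // gt_eqF.
have lnE : ln u2 = ln u1 + 2 * ln w.
  by rewrite u2E lnM ?posrE ?exprn_gt0 // lnXn // mulr_natl addrC.
have lnw := ln_ge_1_inv _ w0.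
rewrite (Shalf_ratio _ v u20) (Shalf_ratio _ v u10) lnE.
set a := v / u1; have -> : v / u2 = a / w ^+ 2.
  by rewrite /a u2E; field; rewrite !gt_eqF.
have P := Shalf_increment_poly_ge0 w a w1.
have -> : (u2 - u1) / (4 * u2) = (w ^+ 2 - 1) / (4 * w ^+ 2).
  by rewrite u2E; field; rewrite !gt_eqF.
rewrite -subr_ge0.
have -> : ln u1 + 2 * ln w - (1 - a / w ^+ 2) / 2 - (1 - a / w ^+ 2) ^+ 2 / 6
   - (ln u1 - (1 - a) / 2 - (1 - a) ^+ 2 / 6) - (w ^+ 2 - 1) / (4 * w ^+ 2)
   = 2 * (ln w - (1 - w^-1)) + (w - 1) *
     (12 * w ^+ 3 - a * (w + 1) * (5 * w ^+ 2 - a * (w ^+ 2 + 1))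
      - 3 / 2 * w ^+ 2 * (w + 1)) / (6 * w ^+ 4).
  by field; rewrite gt_eqF.
apply: addr_ge0; first lra.
apply: divr_ge0; first by apply: mulr_ge0; lra.
by apply: mulr_ge0 => //; apply: exprn_ge0; exact: ltW.
Qed.

Lemma Shalf_gap Cs v : 0 < v -> v <= Cs ->
  5 / 24 <= Shalf (2 * Cs + 1) v - Shalf Cs v.
Proof.
move=> v0 vCs; have Cs0 : 0 < Cs by lra.
have U0 : 0 < 2 * Cs + 1 by lra.
set t := Cs / (2 * Cs + 1); set a := v / Cs.
have t0 : 0 < t by rewrite divr_gt0.
have t_le : t <= 1 / 2 by rewrite /t ler_pdivrMr //; lra.
have a0 : 0 < a by rewrite divr_gt0.
have a_le1 : a <= 1 by rewrite /a ler_pdivrMr //; lra.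
have lnE : ln (2 * Cs + 1) = ln Cs + ln t^-1.
  by rewrite -lnM ?posrE ?invr_gt0 // /t invf_div mulrCA divff ?gt_eqF ?mulr1.
have lnt : 1 - t <= ln t^-1 by rewrite -[X in 1 - X]invrK ln_ge_1_inv // invr_gt0.
rewrite (Shalf_ratio _ v U0) (Shalf_ratio _ v Cs0) lnE -/a.
have -> : v / (2 * Cs + 1) = a * t by rewrite /a /t; field; rewrite !gt_eqF.
have cert1 : 0 <= (1 - t) * ((1 - a) * (4 - t - a * (1 + t))).
  by apply: mulr_ge0; [lra | apply: mulr_ge0; nra].
have cert2 : 0 <= (1 - 2 * t) * (3 + 2 * t) by apply: mulr_ge0; lra.
nra.
Qed.

Definition Shalf_slope u M : R := u^-1 / 2 + M / (6 * u ^+ 2).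

Lemma Shalf_lipschitz2 u x y M : 0 < u -> `|2 * u - x - y| <= M ->
  `|Shalf u x - Shalf u y| <= `|x - y| * Shalf_slope u M.
Proof.
move=> u0 hM.
have -> : Shalf u x - Shalf u y
    = (x - y) * (u^-1 / 2 + (2 * u - x - y) / (6 * u ^+ 2)).
  by rewrite /Shalf; field; rewrite gt_eqF.
rewrite normrM ler_wpM2l // (le_trans (ler_normD _ _)) //.
have den0 : 0 < 6 * u ^+ 2 by rewrite mulr_gt0 // exprn_gt0.
have -> : `|u^-1 / 2| = u^-1 / 2 by rewrite gtr0_norm // divr_gt0 ?invr_gt0.
rewrite /Shalf_slope lerD2l normrM [`|(6 * u ^+ 2)^-1|]gtr0_norm ?invr_gt0 //.
by rewrite ler_wpM2r // invr_ge0; exact: ltW.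
Qed.

Lemma Shalf_slope_le e u M : 0 < e -> e <= u -> 0 <= M ->
  Shalf_slope u M <= Shalf_slope e M.
Proof.
move=> e0 eu M0; have u0 : 0 < u by apply: lt_le_trans eu.
have sq : 6 * e ^+ 2 <= 6 * u ^+ 2 by nra.
apply: lerD; first by rewrite ler_wpM2r // lef_pV2 ?posrE.
by rewrite ler_wpM2l // lef_pV2 ?posrE ?mulr_gt0 ?exprn_gt0.
Qed.

Lemma Shalf_slope_le1 y : 1 <= y -> Shalf_slope y (2 * y + 1) <= 1.
Proof.
move=> y1; have y0 : 0 < y by lra.
have Vle1 : y^-1 <= 1 by rewrite invf_le1.
have V0 : 0 < y^-1 by rewrite invr_gt0.
have -> : Shalf_slope y (2 * y + 1) = 5 / 6 * y^-1 + y^-1 ^+ 2 / 6.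
  by rewrite /Shalf_slope; field; rewrite gt_eqF.
nra.
Qed.

Lemma Shalf_strongly_monotone U x y v : 0 < x -> 0 < y -> x <= U -> y <= U ->
  (x - y) ^+ 2 / (4 * U) <= (x - y) * (Shalf x v - Shalf y v).
Proof.
wlog yx : x y / y <= x => [hwlog|] x0 y0 xU yU.
  case: (lerP y x) => [|/ltW] xy; first exact: hwlog.
  have -> : (x - y) ^+ 2 = (y - x) ^+ 2 by rewrite -sqrrN opprB.
  have -> : (x - y) * (Shalf x v - Shalf y v)
          = (y - x) * (Shalf y v - Shalf x v) by ring.
  exact: hwlog.
have incr := Shalf_increment _ _ v y0 yx.
have x_le : (x - y) / (4 * U) <= (x - y) / (4 * x).
  by rewrite ler_wpM2l ?subr_ge0 // lef_pV2 ?posrE; lra.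
rewrite expr2 -mulrA ler_wpM2l ?subr_ge0 //; exact: le_trans x_le incr.
Qed.

Lemma mul_ge_young (c d e : R) : 0 < c -> - (c / 2) * d ^+ 2 - e ^+ 2 / (2 * c) <= d * e.
Proof.
move=> c0; have := sqr_ge0 (c * d + e).
have -> : (c * d + e) ^+ 2 = (2 * c) * (c / 2 * d ^+ 2 + d * e + e ^+ 2 / (2 * c)).
  by field; rewrite gt_eqF.
by rewrite pmulr_rge0 ?mulr_gt0 //; lra.
Qed.

Lemma sqr_scaleD_le (gam psi d r K : R) : `|d| <= `|r| * K ->
  (gam * d + psi) ^+ 2 <= 2 * (K ^+ 2 + 1) * (gam ^+ 2 * r ^+ 2 + psi ^+ 2).
Proof.
move=> dK; have d2 : d ^+ 2 <= r ^+ 2 * K ^+ 2.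
  rewrite -exprMn -real_normK ?num_real // -[(r * K) ^+ 2]real_normK ?num_real //.
  rewrite ler_sqr ?nnegrE //; apply: le_trans dK _.
  by rewrite normrM ler_wpM2l // ler_norm.
have := sqr_ge0 (gam * d - psi); have := sqr_ge0 K; have := sqr_ge0 psi.
have := sqr_ge0 gam; have := sqr_ge0 r; have := sqr_ge0 d.
nra.
Qed.

Lemma pointwise_lb_large Cs gam x x0 y y0 psi : 0 < gam ->
  0 < x -> x <= Cs -> 0 < x0 -> x0 <= Cs -> 2 * Cs + 1 <= y ->
  `|x0 - y0| <= 1 / 48 -> `|psi| <= gam / 48 ->
  Cs / 6 * gam <= (x - y) * (gam * (Shalf x x0 - Shalf y y0) + psi).
Proof.
move=> gam0 x_gt0 xCs x0_gt0 x0Cs yU r48 psi48.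
have Cs0 : 0 < Cs by lra.
have U0 : 0 < 2 * Cs + 1 by lra.
have gap : 5 / 24 <= Shalf y x0 - Shalf x x0.
  have := Shalf_increment _ _ x0 U0 yU.
  have := Shalf_increment _ _ x0 x_gt0 xCs.
  have := Shalf_gap _ _ x0_gt0 x0Cs.
  have : 0 <= (y - (2 * Cs + 1)) / (4 * y) by apply: divr_ge0; lra.
  have : 0 <= (Cs - x) / (4 * Cs) by apply: divr_ge0; lra.
  lra.
have drift : `|Shalf y x0 - Shalf y y0| <= 1 / 48.
  have /andP[r1 r2] : - (1 / 48) <= x0 - y0 <= 1 / 48 by rewrite -ler_norml.
  have M_ge : `|2 * y - x0 - y0| <= 2 * y + 1.
    by rewrite ler_norml; apply/andP; split; lra.
  apply: le_trans (Shalf_lipschitz2 _ _ _ _ (ltac:(lra) : 0 < y) M_ge) _.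
  have slope1 : Shalf_slope y (2 * y + 1) <= 1 by apply: Shalf_slope_le1; lra.
  by apply: le_trans (ler_wpM2l (normr_ge0 _) slope1) _; rewrite mulr1.
move: drift psi48; rewrite !ler_norml => /andP[d1 d2] /andP[p1 p2].
have inner : gam / 6 <= gam * (Shalf y x0 - Shalf x x0)
    - gam * (Shalf y x0 - Shalf y y0) - psi.
  have : gam * (5 / 24) <= gam * (Shalf y x0 - Shalf x x0) by rewrite ler_pM2l.
  have : gam * (Shalf y x0 - Shalf y y0) <= gam * (1 / 48) by rewrite ler_pM2l.
  lra.
have -> : (x - y) * (gam * (Shalf x x0 - Shalf y y0) + psi)
    = (y - x) * (gam * (Shalf y x0 - Shalf x x0)
                 - gam * (Shalf y x0 - Shalf y y0) - psi) by ring.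
apply: le_trans (_ : (y - x) * (gam / 6) <= _); last by apply: ler_wpM2l; lra.
have -> : Cs / 6 * gam = Cs * (gam / 6) by ring.
by apply: ler_wpM2r; [apply: divr_ge0; lra | lra].
Qed.

Definition coercivity_const Cs gam : R := gam / (8 * (2 * Cs + 1)).

Lemma coercivity_const_gt0 Cs gam : 0 < Cs -> 0 < gam ->
  0 < coercivity_const Cs gam.
Proof. by move=> Cs0 gam0; rewrite divr_gt0 // mulr_gt0 //; lra. Qed.

Definition perturbation_const Cs gam eps : R :=
  4 * (2 * Cs + 1) * (Shalf_slope eps (2 * Cs + 1) ^+ 2 + 1) / gam.

Lemma perturbation_const_gt0 Cs gam eps : 0 < Cs -> 0 < gam ->
  0 < perturbation_const Cs gam eps.
Proof.
move=> Cs0 gam0; have K2 := sqr_ge0 (Shalf_slope eps (2 * Cs + 1)).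
by rewrite /perturbation_const divr_gt0 ?mulr_gt0 //; lra.
Qed.

Lemma pointwise_lb_moderate Cs gam eps x x0 y y0 psi : 0 < gam ->
  0 < eps -> eps <= x -> x <= Cs -> 0 < x0 -> x0 <= Cs ->
  0 < y -> y <= 2 * Cs + 1 -> `|x0 - y0| <= 1 ->
  coercivity_const Cs gam * (x - y) ^+ 2
    - perturbation_const Cs gam eps * (gam ^+ 2 * (x0 - y0) ^+ 2 + psi ^+ 2)
  <= (x - y) * (gam * (Shalf x x0 - Shalf y y0) + psi).
Proof.
move=> gam0 eps0 ex xCs x0_gt0 x0Cs y_gt0 yU r1.
rewrite /coercivity_const /perturbation_const.
set U := 2 * Cs + 1; set K := Shalf_slope eps U.
have x_gt0 : 0 < x by lra.
have U0 : 0 < U by rewrite /U; lra.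
have xU : x <= U by rewrite /U; lra.
have coerc := Shalf_strongly_monotone _ _ _ y0 x_gt0 y_gt0 xU yU.
have drift : `|Shalf x x0 - Shalf x y0| <= `|x0 - y0| * K.
  have /andP[r_lo r_hi] : - 1 <= x0 - y0 <= 1 by rewrite -ler_norml.
  apply: le_trans (Shalf_lipschitz2 _ _ _ U x_gt0 _) _.
    by rewrite ler_norml /U; apply/andP; split; lra.
  by rewrite ler_wpM2l // Shalf_slope_le // /U; lra.
have e2 := sqr_scaleD_le gam psi _ _ _ drift.
set e := gam * (Shalf x x0 - Shalf x y0) + psi.
have young := mul_ge_young _ (x - y) e (divr_gt0 gam0 (mulr_gt0 (ltr0Sn _ 3) U0)).
have -> : (x - y) * (gam * (Shalf x x0 - Shalf y y0) + psi)
    = gam * ((x - y) * (Shalf x y0 - Shalf y y0)) + (x - y) * e by rewrite /e; ring.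
have -> : gam / (8 * U) * (x - y) ^+ 2
    = gam * ((x - y) ^+ 2 / (4 * U)) - gam / (4 * U) / 2 * (x - y) ^+ 2.
  by field; rewrite gt_eqF.
have -> : 4 * U * (K ^+ 2 + 1) / gam * (gam ^+ 2 * (x0 - y0) ^+ 2 + psi ^+ 2)
    = 2 * (K ^+ 2 + 1) * (gam ^+ 2 * (x0 - y0) ^+ 2 + psi ^+ 2) / (2 * (gam / (4 * U))).
  by field; rewrite !gt_eqF.
have : e ^+ 2 / (2 * (gam / (4 * U)))
    <= 2 * (K ^+ 2 + 1) * (gam ^+ 2 * (x0 - y0) ^+ 2 + psi ^+ 2) / (2 * (gam / (4 * U))).
  by apply: ler_wpM2r e2; rewrite invr_ge0; apply: mulr_ge0 => //; apply: divr_ge0; lra.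
have : gam * ((x - y) ^+ 2 / (4 * U)) <= gam * ((x - y) * (Shalf x y0 - Shalf y y0)).
  by rewrite ler_pM2l.
lra.
Qed.

Lemma pointwise_lb Cs gam eps x x0 y y0 psi : 0 < gam ->
  0 < eps -> eps <= x -> x <= Cs -> 0 < x0 -> x0 <= Cs -> 0 < y ->
  `|x0 - y0| <= 1 / 48 -> `|psi| <= gam / 48 ->
  Cs / 6 * gam * (if 2 * Cs + 1 <= y then 1 else 0)
    - perturbation_const Cs gam eps * (gam ^+ 2 * (x0 - y0) ^+ 2 + psi ^+ 2)
  <= (x - y) * (gam * (Shalf x x0 - Shalf y y0) + psi).
Proof.
move=> gam0 eps0 ex xCs x0_gt0 x0Cs y_gt0 r48 psi48.
have Cs0 : 0 < Cs by lra.
have pert_ge0 :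
    0 <= perturbation_const Cs gam eps * (gam ^+ 2 * (x0 - y0) ^+ 2 + psi ^+ 2).
  apply: mulr_ge0; first exact: ltW (perturbation_const_gt0 _ _ _ Cs0 gam0).
  by apply: addr_ge0; [apply: mulr_ge0|]; exact: sqr_ge0.
case: (leP (2 * Cs + 1) y) => [y_large | y_small]; rewrite ?mulr1 ?mulr0.
  apply: le_trans (_ : Cs / 6 * gam <= _); first by rewrite gerBl.
  by apply: pointwise_lb_large => //; lra.
have r1 : `|x0 - y0| <= 1 by apply: le_trans r48 _; lra.
apply: le_trans (pointwise_lb_moderate _ _ _ _ _ _ _ _ gam0 eps0 ex xCs x0_gt0 x0Cs
  y_gt0 (ltW y_small) r1).
by rewrite lerD2r; apply: mulr_ge0 (ltW (coercivity_const_gt0 _ _ Cs0 gam0)) (sqr_ge0 _).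
Qed.
End Shalf.

Section Grid.
Context {R : realType} {N : nat} {h : R}.
Hypothesis h_ge0 : 0 <= h.
Implicit Types (f g l e : grid N -> R).

Lemma gnorm2_sq f : gnorm2 h f ^+ 2 = h ^+ 3 * \sum_p f p ^+ 2.
Proof.
rewrite sqr_sqrtr; last first.
  by rewrite mulr_ge0 ?exprn_ge0 ?sumr_ge0 // => p _; rewrite -expr2 sqr_ge0.
by rewrite /gip; under eq_bigr do rewrite -expr2.
Qed.

Lemma gnorm2_sq_ge_point f p : h ^+ 3 * f p ^+ 2 <= gnorm2 h f ^+ 2.
Proof.
rewrite gnorm2_sq ler_wpM2l ?exprn_ge0 // (bigD1 p) //= lerDl.
by rewrite sumr_ge0 // => q _; rewrite sqr_ge0.
Qed.

Lemma gip_ge_sum f g l e : (forall p, l p - e p <= f p * g p) ->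
  h ^+ 3 * \sum_p l p - h ^+ 3 * \sum_p e p <= gip h f g.
Proof. by move=> lfg; rewrite -mulrBr -sumrB ler_wpM2l ?exprn_ge0 // ler_sum. Qed.
End Grid.

Lemma le_of_gnorm2_le_sqr {R : realType} {N : nat} {h : R} (f : grid N -> R) p c :
  0 < h -> 0 <= c -> h <= c ^+ 2 ->
  gnorm2 h f <= h ^+ 2 -> `|f p| <= c.
Proof.
move=> h0 c0 hc fh; have h_ge0 := ltW h0.
rewrite -ler_sqr ?nnegrE // real_normK ?num_real //.
apply: le_trans hc; rewrite -(ler_pM2l (exprn_gt0 3 h0)).
apply: le_trans (gnorm2_sq_ge_point h_ge0 f p) _.
have -> : h ^+ 3 * h = (h ^+ 2) ^+ 2 by rewrite -exprM -exprSr.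
by rewrite ler_sqr ?nnegrE ?exprn_ge0 ?sqrtr_ge0.
Qed.

Lemma le_gnormInf {R : realType} {N : nat} (f : grid N -> R) p : `|f p| <= gnormInf f.
Proof. by apply/bigmax_geP; right; exists p. Qed.

Lemma Lstar_sum {R : realType} {N : nat} (Cs : R) (rho : grid N -> R) :
  (Lstar Cs rho)%:R = \sum_p (if 2 * Cs + 1 <= rho p then 1 else 0 : R).
Proof.
rewrite /Lstar -sum1_card natr_sum big_mkcond /=.
by apply: eq_bigr => p _; rewrite inE; case: ifP.
Qed.

Lemma Lstar_eq0 {R : realType} {N : nat} {Cs : R} {rho : grid N -> R} p :
  Lstar Cs rho = 0%N -> rho p < 2 * Cs + 1.
Proof.
move/eqP; rewrite cards_eq0 => /eqP L0.
have : p \notin [set q | 2 * Cs + 1 <= rho q] by rewrite L0 inE.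
by rewrite inE -ltNge.
Qed.

Section Mesh.
Context {R : realType}.

Lemma powR_le_cube (x : R) : 0 < x <= 1 -> powR x (15 / 4) <= x ^+ 3.
Proof.
move=> x01; have /andP[x0 _] := x01.
rewrite -powR_mulrn; last exact: ltW.
by apply: (ger_powR x01); lra.
Qed.

(* [(1/48)^2] and [gam/48] make the perturbations small enough for
   [pointwise_lb_large]. *)
Definition mesh_bound (lam gam : R) : R :=
  Num.min 1 (Num.min (lam ^+ 3 + 1)^-1 (Num.min ((1 / 48) ^+ 2) (gam / 48))).

Lemma mesh_bound_gt0 lam gam : 0 < lam -> 0 < gam -> 0 < mesh_bound lam gam.
Proof.
move=> lam0 gam0; have lam3 : 0 < lam ^+ 3 + 1 by have := exprn_gt0 3 lam0; lra.
by rewrite !lt_min ltr01 invr_gt0 lam3 exprn_gt0 ?divr_gt0 ?ltr0n.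
Qed.

Lemma consistency_error_le_sqr {lam gam dt h : R} : 0 < lam -> 0 < dt -> 0 < h ->
  dt <= mesh_bound lam gam -> h <= mesh_bound lam gam -> dt <= lam * h ->
  powR dt (15 / 4) + powR h (15 / 4) <= h ^+ 2.
Proof.
move=> lam0 dt0 h0; rewrite !le_min => /and4P[dt1 _ _ _] /and4P[h1 h_lam _ _] dt_lam.
have lam3 : 0 < lam ^+ 3 + 1 by have := exprn_gt0 3 lam0; lra.
have cube_le : lam ^+ 3 * h ^+ 3 + h ^+ 3 <= h ^+ 2.
  have : (lam ^+ 3 + 1) * h <= 1 by rewrite -ler_pdivlMl // mulr1.
  have := exprn_gt0 2 h0; nra.
apply: le_trans cube_le; apply: lerD; last by apply: powR_le_cube; rewrite h0.
have dt_cube : powR dt (15 / 4) <= dt ^+ 3 by apply: powR_le_cube; rewrite dt0.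
apply: le_trans dt_cube _; rewrite -exprMn.
by apply: lerXn2r; rewrite ?nnegrE ?(ltW dt0) ?mulr_ge0 ?(ltW lam0) ?(ltW h0).
Qed.
End Mesh.

Lemma small_perturbations {R : realType} {N : nat} {lam gam dt h : R}
    {f g : grid N -> R} : 0 < lam -> 0 < dt -> 0 < h ->
  dt <= mesh_bound lam gam -> h <= mesh_bound lam gam -> dt <= lam * h ->
  gnorm2 h f <= powR dt (15 / 4) + powR h (15 / 4) -> gnormInf g <= h ->
  (forall p, `|f p| <= 1 / 48) /\ (forall p, `|g p| <= gam / 48).
Proof.
move=> lam0 dt0 h0 dt_small h_small dt_lam f_small g_small.
have /and4P[_ _ h48 h_gam] : [&& h <= 1, h <= (lam ^+ 3 + 1)^-1,
    h <= (1 / 48) ^+ 2 & h <= gam / 48] by rewrite -!le_min.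
split=> p; last exact: le_trans (le_gnormInf _ _) (le_trans g_small h_gam).
apply: (le_of_gnorm2_le_sqr _ _ _ h0 _ h48 (le_trans f_small _)).
  by rewrite divr_ge0 ?ler0n.
exact: consistency_error_le_sqr lam0 dt0 h0 dt_small h_small dt_lam.
Qed.

Theorem mainTheorem7 (R : realType) (Cs gam : R) (hCs : 0 < Cs) (hgam : 0 < gam) :
  exists2 C3 : R, 0 < C3 &
  forall eps : R, 0 < eps ->
  exists2 C2 : R, 0 < C2 &
  forall (lam1 lam2 : R), 0 < lam1 -> 0 < lam2 ->
  forall (a b : R), a < b ->
  exists2 h0 : R, 0 < h0 &
  forall (N : nat) (dt : R), (0 < N)%N ->
  let h := (b - a) / N%:R in
  0 < dt -> dt <= h0 -> h <= h0 ->
  lam1 * h <= dt -> dt <= lam2 * h ->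
  forall (crho0 crho1 rho0 rho1 psit : grid N -> R),
  (forall p, eps <= crho1 p /\ crho1 p <= Cs) ->
  (forall p, 0 < crho0 p /\ crho0 p <= Cs) ->
  (forall p, 0 < rho0 p) -> (forall p, 0 < rho1 p) ->
  let rt0 := fun p => crho0 p - rho0 p in
  let rt1 := fun p => crho1 p - rho1 p in
  gnorm2 h rt0 <= powR dt (15 / 4) + powR h (15 / 4) ->
  gnormInf psit <= h ->
  let St := fun p => Sfun crho1 crho0 p - Sfun rho1 rho0 p in
  let lhs := gip h rt1 (fun p => gam * St p + psit p) in
  let err := C2 * (gam ^+ 2 * gnorm2 h rt0 ^+ 2 + gnorm2 h psit ^+ 2) in
  lhs >= Cs / 6 * gam * (Lstar Cs rho1)%:R * h ^+ 3 - err /\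
  ((Lstar Cs rho1 = 0)%N -> lhs >= C3 * gnorm2 h rt1 ^+ 2 - err).
Proof.
exists (coercivity_const Cs gam); first exact: coercivity_const_gt0.
move=> eps eps0; set C2 := perturbation_const Cs gam eps.
exists C2; first exact: perturbation_const_gt0.
move=> lam1 lam2 _ lam2_gt0 a b ab.
exists (mesh_bound lam2 gam); first exact: mesh_bound_gt0.
move=> N dt N_gt0 h dt_gt0 dt_small h_small _ dt_lam crho0 crho1 rho0 rho1 psit
  crho1B crho0B _ rho1_gt0 rt0 rt1 rt0_small psit_small St lhs err.
have h_gt0 : 0 < h by rewrite divr_gt0 ?subr_gt0 ?ltr0n.
have h_ge0 := ltW h_gt0.
have [rt0_48 psit_48] := small_perturbations lam2_gt0 dt_gt0 h_gt0
  dt_small h_small dt_lam rt0_small psit_small.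
pose e p := C2 * (gam ^+ 2 * rt0 p ^+ 2 + psit p ^+ 2).
have err_sum : err = h ^+ 3 * \sum_p e p.
  by rewrite /err !(gnorm2_sq h_ge0) -!mulr_sumr big_split /= -!mulr_sumr; ring.
split.
- rewrite err_sum [_ * h ^+ 3]mulrC Lstar_sum [X in h ^+ 3 * X - _]mulr_sumr.
  apply: (gip_ge_sum h_ge0) => p.
  have [? ?] := crho1B p; have [? ?] := crho0B p.
  by apply: pointwise_lb => //; exact: rt0_48.
- move=> L0; rewrite err_sum (gnorm2_sq h_ge0) mulrCA.
  rewrite [X in h ^+ 3 * X - _]mulr_sumr.
  apply: (gip_ge_sum h_ge0) => p.
  have [? ?] := crho1B p; have [? ?] := crho0B p.
  have rho1_small := Lstar_eq0 p L0.
  apply: pointwise_lb_moderate => //; first lra.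
  by apply: le_trans (rt0_48 p) _; lra.
Qed.
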